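(* Consider the variation of the temporal graph discovery game in which the Discoverer does not learn the static edge set (only the node set). Let $n,T_{\max}\in\mathbb N^+$, $k\in[n]$, $m\in[\binom n2-n]$ and $\delta\in[T_{\max}]$. Then there is an Adversary such that any algorithm winning this game variation on graphs with $n$ nodes and $m$ edges must take at least $\lfloor nT_{\max}/(2\delta k)\rfloor$ rounds. Moreover, this Adversary picks a graph with at most two $\delta$-edge connected components.
   Context: A temporal graph $\mathcal G=(V,E,\lambda)$ with lifetime $T_{\max}$ consists of a finite undirected static graph $(V,E)$ and a labeling $\lambda:E\to\{1,\dots,T_{\max}\}$; edge $e$ is present only at time $\lambda(e)$. $[x]=\{1,\dots,x\}$. Infection model with parameter $\delta$: a set $S\subseteq V\times[0,T_{\max}]$ of at most $k$ seed infections is given; a seed $(u,t)$ makes $u$ infected at time $t$; otherwise a susceptible node $u$ becomes infected at time $t$ iff some neighbour $v$ infectious at time $t$ has $\lambda(uv)=t$ (exactly one infector recorded if several exist). A node infected at time $t$ is infectious at times $t+1,\dots,t+\delta$ and resistant afterwards. The infection log records triples $(u,v,t)$ ($u$ infected $v$ at time $t$). Game (unknown static graph variant): the Discoverer knows only $V$; each round it submits at most $k$ seeds and the Adversary answers with an infection log consistent with the seeds under some temporal graph on $V$ consistent with all previous answers (adaptive). The Discoverer wins iff the temporal graph (edges and labels) it finally submits equals the Adversary's final temporal graph consistent with all logs. $\delta$-edge connected components: relate two edges sharing an endpoint whose labels differ by at most $\delta$; the classes of the transitive closure are the $\delta$-edge connected components. *)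

From mathcomp Require Import all_boot.
Set Implicit Arguments. Unset Strict Implicit. Unset Printing Implicit Defensive.

(* Temporal graph on V = 'I_n with lifetime Tmax, encoded as a finite
   function w on ordered pairs: w (u,v) = 0 means "no edge uv", otherwise
   w (u,v) = lambda(uv) in [1,Tmax]. *)
Definition tgraph (n : nat) := {ffun 'I_n * 'I_n -> nat}.

Definition valid_tgraph n (Tmax : nat) (w : tgraph n) : Prop :=
  (forall u v, w (u, v) = w (v, u)) /\
  (forall u, w (u, u) = 0) /\
  (forall u v, w (u, v) <= Tmax).

Definition edges n (w : tgraph n) : {set 'I_n * 'I_n} :=
  [set p : 'I_n * 'I_n | (p.1 < p.2) && (0 < w p)].

(* a round's query: a set of seed infections (u,t), t in [0,Tmax] *)
Definition seeds n Tmax := {set 'I_n * 'I_Tmax.+1}.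
(* an infection log: triples (u,v,t) = "u infected v at time t" *)
Definition tlog n Tmax := {set 'I_n * 'I_n * 'I_Tmax.+1}.

Section Infection.
Variables (n Tmax delta : nat) (S : seeds n Tmax) (w : tgraph n).

Definition seeded (u : 'I_n) (t : nat) : Prop :=
  exists i : 'I_Tmax.+1, (u, i) \in S /\ nat_of_ord i = t.

Definition infectious (tau : 'I_n -> option nat) (v : 'I_n) (t : nat) : Prop :=
  exists s, tau v = Some s /\ s < t <= s + delta.

Definition triggered (tau : 'I_n -> option nat) (u : 'I_n) (t : nat) : Prop :=
  seeded u t \/
  exists v, infectious tau v t /\ 0 < t /\ w (v, u) = t.

(* tau u = infection time of u (None = never infected): a node gets infected
   at the first time it is triggered while still susceptible *)
Definition infection_times (tau : 'I_n -> option nat) : Prop :=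
  forall u t, tau u = Some t <->
    (triggered tau u t /\ forall t', t' < t -> ~ triggered tau u t').

Definition log_consistent (L : tlog n Tmax) : Prop :=
  exists tau, infection_times tau /\
   (forall u v (i : 'I_Tmax.+1), (u, v, i) \in L ->
      [/\ tau v = Some (nat_of_ord i), ~ seeded v i,
          infectious tau u i & w (u, v) = i]) /\
   (forall u u' v (i i' : 'I_Tmax.+1),
      (u, v, i) \in L -> (u', v, i') \in L -> u = u') /\
   (forall v t, tau v = Some t -> ~ seeded v t ->
      exists u (i : 'I_Tmax.+1), nat_of_ord i = t /\ (u, v, i) \in L).
End Infection.

Definition ecc_rel n (delta : nat) (w : tgraph n) : rel ('I_n * 'I_n) :=
  fun p q => [&& p \in edges w, q \in edges w,
                 [|| p.1 == q.1, p.1 == q.2, p.2 == q.1 | p.2 == q.2],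
                 w p - w q <= delta & w q - w p <= delta].

Definition num_dECC n (delta : nat) (w : tgraph n) : nat :=
  #|[set [set q | connect (ecc_rel delta w) p q] | p in edges w]|.

Definition adversary n Tmax :=
  seq (seeds n Tmax * tlog n Tmax) -> seeds n Tmax -> tlog n Tmax.

Fixpoint play n Tmax (adv : adversary n Tmax)
    (hist : seq (seeds n Tmax * tlog n Tmax)) (qs : seq (seeds n Tmax)) :=
  match qs with
  | [::] => hist
  | q :: qs' => play adv (rcons hist (q, adv hist q)) qs'
  end.

Definition hist_consistent n Tmax delta
    (H : seq (seeds n Tmax * tlog n Tmax)) (w : tgraph n) : Prop :=
  forall q L, (q, L) \in H -> log_consistent delta q w L.

Definition adv_graph n Tmax m delta (w : tgraph n) : Prop :=
  [/\ valid_tgraph Tmax w, #|edges w| = m & num_dECC delta w <= 2].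

From mathcomp Require Import all_boot zify.
From Stdlib Require Import ClassicalEpsilon.
Set Implicit Arguments. Unset Strict Implicit. Unset Printing Implicit Defensive.

(* The Adversary hides a secret edge among n * Tmax candidates: the edge
   {i, i+1} of a Hamiltonian cycle on the nodes, with label t + 1, added to a
   fixed background of m - 1 edges which avoid the cycle, carry the label Tmax
   and all meet a star centred at node 0.  Every candidate graph thus has m
   edges and at most two delta-edge connected components.  Every query is
   answered with an infection log of the background alone.  That log stays
   valid for the candidate (i, t) unless an endpoint of {i, i+1} is infectious
   at time t + 1, which (background edges firing only at time Tmax) requires a
   seed (u, s) with u in {i, i+1} and s <= t < s + delta.  A seed thus rules
   out at most 2 delta candidates, and fewer than n Tmax / (2 delta k) rounds
   of k seeds leave two candidates. *)

Section InfectionProcess.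
Variables (n Tmax delta : nat) (S : seeds n Tmax) (w : tgraph n).

Definition seededb (v : 'I_n) (t : nat) :=
  [exists i : 'I_Tmax.+1, ((v, i) \in S) && (val i == t)].

Lemma seededP v t : reflect (seeded S v t) (seededb v t).
Proof.
apply: (iffP existsP) => [[i /andP [iS /eqP it]]|[i [iS it]]]; exists i => //.
by rewrite iS -it eqxx.
Qed.

Definition triggeredb (tau : 'I_n -> option nat) (u : 'I_n) (t : nat) :=
  seededb u t || [exists v, [&& (if tau v is Some s then s < t <= s + delta
                                 else false), 0 < t & w (v, u) == t]].

Lemma triggeredP tau u t : reflect (triggered delta S w tau u t) (triggeredb tau u t).
Proof.
apply: (iffP orP) => [[/seededP|/existsP [v /and3P [inf t0 /eqP wt]]]|
                      [/seededP|[v [[s [tv st] [t0 wt]]]]]].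
- by left.
- right; exists v; split; last by [].
  by move: inf; case tv: (tau v) => [s|] // st; exists s.
- by left.
- by right; apply/existsP; exists v; rewrite tv st t0 wt eqxx.
Qed.

Lemma triggered_local (tau1 tau2 : 'I_n -> option nat) u t :
  (forall v s, s < t -> tau1 v = Some s -> tau2 v = Some s) ->
  triggered delta S w tau1 u t -> triggered delta S w tau2 u t.
Proof.
move=> tau12 [seed|[v [[s [tv /andP [st ts]] [t0 wt]]]]]; first by left.
by right; exists v; split=> //; exists s; rewrite (tau12 v s) // st.
Qed.

Fixpoint infection_before (t : nat) : 'I_n -> option nat :=
  if t is t'.+1 then fun u =>
    if infection_before t' u is Some s then Some s
    else if triggeredb (infection_before t') u t' then Some t' else None
  else fun _ => None.

Local Notation ib := infection_before.

Definition first_triggered (u : 'I_n) (t : nat) :=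
  triggered delta S w (ib t) u t /\ forall t', t' < t -> ~ triggered delta S w (ib t') u t'.

Lemma first_triggered_uniq u s s' : first_triggered u s -> first_triggered u s' -> s = s'.
Proof.
move=> [trs early] [trs' early']; case: (ltngtP s s') => // lt.
- by case: (early' s lt).
- by case: (early s' lt).
Qed.

Lemma infection_before_NoneP t u :
  ib t u = None <-> forall t', t' < t -> ~ triggered delta S w (ib t') u t'.
Proof.
elim: t => [|t IH] //=; case E: (ib t u) => [s|].
  split=> // early; move: E; rewrite (IH.2 _) // => t' lt; apply: early.
  exact: ltnW.
case: (triggeredP (ib t) u t) => trig; split=> //.
- by move=> /(_ t (ltnSn t)).
- move=> _ t'; rewrite ltnS leq_eqVlt => /orP [/eqP -> //|]; exact: (IH.1 E).
Qed.

Lemma infection_beforeP t u s : ib t u = Some s <-> s < t /\ first_triggered u s.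
Proof.
elim: t s => [|t IH] s; first by split=> [//|[]].
rewrite /=; case E: (ib t u) => [s0|].
  have [s0t fs0] := (IH s0).1 E.
  split=> [[<-]|[_ fs]]; first by split=> //; exact: ltnW.
  by rewrite (first_triggered_uniq fs0 fs).
have early := (infection_before_NoneP t u).1 E.
have notbefore : forall s, s < t -> ~ first_triggered u s.
  by move=> s' lt fs'; move: E; rewrite ((IH s').2 (conj lt fs')).
case: (triggeredP (ib t) u t) => trig.
  split=> [[<-]|[]]; first by split.
  rewrite ltnS leq_eqVlt => /orP [/eqP -> //|lt fs].
  by case: (notbefore s lt fs).
split=> // [[]]; rewrite ltnS leq_eqVlt => /orP [/eqP -> [] //|lt fs].
by case: (notbefore s lt fs).
Qed.

Lemma infection_before_agree t t' v s :
  s < t -> s < t' -> ib t v = Some s -> ib t' v = Some s.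
Proof. by move=> st st' /infection_beforeP [_ fs]; apply/infection_beforeP. Qed.

Hypothesis w_le : forall u v, w (u, v) <= Tmax.

Lemma triggered_le tau u t : triggered delta S w tau u t -> t <= Tmax.
Proof. by case=> [[i [_ <-]]|[v [_ [_ <-]]]]; [rewrite -ltnS|]. Qed.

Definition infection := ib Tmax.+1.

Lemma triggered_infection u t :
  triggered delta S w infection u t <-> triggered delta S w (ib t) u t.
Proof.
split=> trig; have tT := triggered_le trig; apply: triggered_local trig => v s st;
  apply: infection_before_agree => //; exact: leq_trans st (leqW tT).
Qed.

Lemma infection_times_infection : infection_times delta S w infection.
Proof.
move=> u t; rewrite infection_beforeP /first_triggered triggered_infection.
split=> [[_ [trig early]]|[trig early]].
  by split=> // t' lt; rewrite triggered_infection; exact: early.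
split; first by rewrite ltnS; exact: triggered_le trig.
by split=> // t' lt; rewrite -triggered_infection; exact: early.
Qed.

Lemma log_exists : exists L, log_consistent delta S w L.
Proof.
have infector v : exists u, forall t, infection v = Some t -> ~ seeded S v t ->
    infectious delta infection u t /\ w (u, v) = t.
  case E: (infection v) => [t|]; last by exists v.
  case: (seededP v t) => [seed|unseeded]; first by exists v => _ [<-].
  have [[//|[u [inf [_ wt]]]] _] := (infection_times_infection v t).1 E.
  by exists u => _ [<-].
have [f fP] := fin_all_exists infector.
exists [set x : 'I_n * 'I_n * 'I_Tmax.+1 | [&& x.1.1 == f x.1.2,
          infection x.1.2 == Some (val x.2) & ~~ seededb x.1.2 x.2]].
exists infection; split; first exact: infection_times_infection.
split; [|split].
- move=> u v i; rewrite inE /= => /and3P [/eqP -> /eqP vi /seededP unseeded].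
  by have [inf wt] := fP v i vi unseeded.
- by move=> u u' v i i'; rewrite !inE /= => /and3P [/eqP -> _ _] /and3P [/eqP -> _ _].
- move=> v t vt unseeded; have [_ wt] := fP v t vt unseeded.
  have tT : t < Tmax.+1 by rewrite ltnS -wt.
  exists (f v), (Ordinal tT); split=> //.
  by rewrite inE /= eqxx vt eqxx; apply/seededP.
Qed.

End InfectionProcess.

Section PreferredAnswers.
Variables (n Tmax delta : nat) (admissible : tgraph n -> Prop)
          (pref : seeds n Tmax -> tlog n Tmax).
Hypothesis admissible_answerable :
  forall w (S : seeds n Tmax), admissible w -> exists L, log_consistent delta S w L.

Local Notation history := (seq (seeds n Tmax * tlog n Tmax)).

Definition explainable (H : history) :=
  exists w, admissible w /\ hist_consistent delta H w.

Definition pref_adversary : adversary n Tmax := fun H S =>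
  if excluded_middle_informative (explainable (rcons H (S, pref S))) then pref S
  else if excluded_middle_informative (exists L, explainable (rcons H (S, L))) is left ex
  then proj1_sig (constructive_indefinite_description _ ex) else set0.

Lemma hist_consistent_rcons (H : history) S L w :
  hist_consistent delta (rcons H (S, L)) w <->
  hist_consistent delta H w /\ log_consistent delta S w L.
Proof.
split=> [HSw|[Hw Sw] S' L']; last by rewrite mem_rcons inE => /orP [/eqP [-> ->]|/Hw].
by split=> [S' L' HS'|]; apply: HSw; rewrite mem_rcons inE ?HS' ?orbT ?eqxx.
Qed.

Lemma explainable_pref_adversary (H : history) S :
  explainable H -> explainable (rcons H (S, pref_adversary H S)).
Proof.
move=> [w [aw Hw]]; rewrite /pref_adversary.
destruct excluded_middle_informative as [|noS]; first by [].
destruct excluded_middle_informative as [ex|noL].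
  exact: (proj2_sig (constructive_indefinite_description _ ex)).
have [L wL] := admissible_answerable S aw.
by case: noL; exists L, w; split=> //; apply/hist_consistent_rcons.
Qed.

Lemma explainable_play (H : history) qs :
  explainable H -> explainable (play pref_adversary H qs).
Proof.
by elim: qs H => [|S qs IH] H //= HH; apply/IH/explainable_pref_adversary.
Qed.

Lemma play_pref_adversary (H : history) qs w :
  admissible w -> hist_consistent delta H w ->
  {in qs, forall S, log_consistent delta S w (pref S)} ->
  play pref_adversary H qs = H ++ [seq (Q, pref Q) | Q <- qs].
Proof.
elim: qs H => [|S qs IH] H aw Hw qsw /=; first by rewrite cats0.
have HSw : hist_consistent delta (rcons H (S, pref S)) w.
  by apply/hist_consistent_rcons; split=> //; apply: qsw; rewrite inE eqxx.
have -> : pref_adversary H S = pref S.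
  by rewrite /pref_adversary; destruct excluded_middle_informative as [|[]] => //; exists w.
rewrite (IH _ aw HSw) ?cat_rcons // => S' qsS'.
by apply: qsw; rewrite inE qsS' orbT.
Qed.

Lemma hist_consistent_play_pref qs w w' :
  admissible w ->
  {in qs, forall S, log_consistent delta S w (pref S)} ->
  {in qs, forall S, log_consistent delta S w' (pref S)} ->
  hist_consistent delta (play pref_adversary [::] qs) w'.
Proof.
move=> aw qsw qsw'; rewrite (play_pref_adversary aw _ qsw) // => S L.
by case/mapP=> S' qsS' [-> ->]; apply: qsw'.
Qed.

End PreferredAnswers.

Definition share_endpoint (T : eqType) (p q : T * T) :=
  [|| p.1 == q.1, p.1 == q.2, p.2 == q.1 | p.2 == q.2].

Lemma share_endpoint_sym (T : eqType) (p q : T * T) : share_endpoint p q = share_endpoint q p.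
Proof.
rewrite /share_endpoint (eq_sym p.1 q.1) (eq_sym p.1 q.2) (eq_sym p.2 q.1) (eq_sym p.2 q.2).
by case: (q.1 == p.1); case: (q.2 == p.1); case: (q.1 == p.2); case: (q.2 == p.2).
Qed.

Section Cycle.
Variable n : nat.

Local Notation succ := (@ordS n).

Lemma nat_of_ordS (i : 'I_n) : succ i = (if i.+1 < n then i.+1 else 0) :> nat.
Proof.
rewrite /=; case: ltnP => [lt|ge]; first by rewrite modn_small.
have -> : i.+1 = n by apply/eqP; rewrite eqn_leq ge ltn_ord.
exact: modnn.
Qed.

Lemma ordS_neq (n_gt1 : 1 < n) (i : 'I_n) : succ i != i.
Proof. by apply/eqP => /(congr1 (@nat_of_ord n)); rewrite nat_of_ordS; case: ltnP; lia. Qed.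

Definition cycle_edge (i : 'I_n) (p : 'I_n * 'I_n) := (p == (i, succ i)) || (p == (succ i, i)).

Definition cycle_adj (p : 'I_n * 'I_n) := (p.2 == succ p.1) || (p.1 == succ p.2).

Lemma cycle_edge_adj i p : cycle_edge i p -> cycle_adj p.
Proof. by case/orP => /eqP ->; rewrite /cycle_adj eqxx ?orbT. Qed.

Lemma cycle_edge_sym i u v : cycle_edge i (u, v) = cycle_edge i (v, u).
Proof. by rewrite /cycle_edge !xpair_eqE orbC; congr orb; rewrite andbC. Qed.

Lemma cycle_edge_ends i p : cycle_edge i p -> (p.1 == i) || (p.1 == succ i).
Proof. by case/orP => /eqP ->; rewrite eqxx ?orbT. Qed.

Definition cycle_sort (i : 'I_n) := if i < succ i then (i, succ i) else (succ i, i).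

Lemma cycle_edge_sort i : cycle_edge i (cycle_sort i).
Proof. by rewrite /cycle_sort /cycle_edge; case: ifP; rewrite eqxx ?orbT. Qed.

Lemma cycle_edge_sorted i p : cycle_edge i p -> p.1 < p.2 -> p = cycle_sort i.
Proof.
rewrite /cycle_sort; case/orP => /eqP -> /= lt; first by rewrite lt.
by rewrite ltnNge (ltnW lt).
Qed.

Lemma cycle_adj_sort (p : 'I_n * 'I_n) :
  p.1 < p.2 -> cycle_adj p -> exists i, p = cycle_sort i.
Proof.
move=> lt /orP [/eqP e|/eqP e]; [exists p.1|exists p.2]; apply: cycle_edge_sorted lt.
  by rewrite /cycle_edge -e -surjective_pairing eqxx.
by rewrite /cycle_edge -e -surjective_pairing eqxx orbT.
Qed.

Hypothesis n_gt2 : 2 < n.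

Lemma ordS2_neq (i : 'I_n) : succ (succ i) != i.
Proof.
apply/eqP => /(congr1 (@nat_of_ord n)); rewrite !nat_of_ordS.
by case: (ltnP i.+1 n) => h1 /=; case: ltnP => h2; lia.
Qed.

Lemma cycle_edgeI i j : cycle_edge i (j, succ j) -> i = j.
Proof.
case/orP; rewrite xpair_eqE => /andP [/eqP -> /eqP ssi] //.
by move: (ordS2_neq i); rewrite ssi eqxx.
Qed.

Lemma cycle_sort_lt i : (cycle_sort i).1 < (cycle_sort i).2.
Proof.
have := ordS_neq (ltnW n_gt2) i; rewrite /cycle_sort -(inj_eq val_inj).
by case: (ltngtP i (succ i)) => // ->.
Qed.

End Cycle.

Section SecretEdge.
Variables (n Tmax delta : nat).
Hypothesis Tmax_gt0 : 0 < Tmax.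

Local Notation succ := (@ordS n).

(* A candidate pos = (i, t) stands for the cycle edge {i, i + 1} with label t + 1. *)
Definition hits (pos : 'I_n * 'I_Tmax) (sd : 'I_n * 'I_Tmax.+1) :=
  ((sd.1 == pos.1) || (sd.1 == succ pos.1)) && (sd.2 <= pos.2 < sd.2 + delta).

Definition misses (S : seeds n Tmax) pos := [forall sd in S, ~~ hits pos sd].

Lemma card_detected (S : seeds n Tmax) :
  #|[set pos | ~~ misses S pos]| <= #|S| * delta * 2.
Proof.
(* a position hit by the seed (u, s) is (u or u - 1, s + d) for some d < delta *)
pose j0 : 'I_Tmax := Ordinal Tmax_gt0.
pose f (x : 'I_n * 'I_Tmax.+1 * 'I_delta * bool) : 'I_n * 'I_Tmax :=
  (if x.2 then x.1.1.1 else ord_pred x.1.1.1, insubd j0 (x.1.1.2 + x.1.2)).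
have detected_sub : [set pos | ~~ misses S pos] \subset f @: setX (setX S setT) setT.
  apply/subsetP => -[i j]; rewrite inE negb_forall_in => /existsP [sd /andP [sdS]].
  rewrite negbK => /andP [/= ends /andP [sdj jsd]].
  have jd : j - sd.2 < delta by rewrite ltn_subLR.
  apply/imsetP; exists (sd, Ordinal jd, sd.1 == i); first by rewrite !inE sdS.
  rewrite /f /=; congr pair.
    by case: ifP => [/eqP //|ne]; move: ends; rewrite ne => /eqP ->; rewrite ordSK.
  by apply/val_inj; rewrite val_insubd /= subnKC // ltn_ord.
apply: leq_trans (subset_leq_card detected_sub) _.
apply: leq_trans (leq_imset_card _ _) _.
by rewrite !cardsX !cardsT card_ord card_bool.
Qed.

Lemma card_detected_seq (qs : seq (seeds n Tmax)) k :
  all (fun S : seeds n Tmax => #|S| <= k) qs ->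
  #|[set pos | ~~ all (misses^~ pos) qs]| <= size qs * (k * delta * 2).
Proof.
elim: qs => [|S qs IH] /=; first by rewrite mul0n leqn0 cards_eq0.
case/andP=> Sk qsk; rewrite mulSn.
have -> : [set pos | ~~ (misses S pos && all (misses^~ pos) qs)] =
          [set pos | ~~ misses S pos] :|: [set pos | ~~ all (misses^~ pos) qs].
  by apply/setP => pos; rewrite !inE negb_and.
apply: leq_trans (leq_card_setU _ _) (leq_add _ (IH qsk)).
by apply: leq_trans (card_detected S) _; rewrite !leq_mul2r Sk !orbT.
Qed.

Lemma two_missed (qs : seq (seeds n Tmax)) k :
  0 < k -> 0 < delta -> all (fun S : seeds n Tmax => #|S| <= k) qs ->
  size qs < (n * Tmax) %/ (2 * delta * k) ->
  exists p1 p2, [/\ p1 != p2, all (misses^~ p1) qs & all (misses^~ p2) qs].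
Proof.
move=> k_gt0 delta_gt0 qsk; rewrite leq_divRL ?muln_gt0 ?k_gt0 ?delta_gt0 // => few.
have := card_detected_seq qsk; have := cardsC [set pos | ~~ all (misses^~ pos) qs].
rewrite card_prod !card_ord => ncard detected.
have /card_gt1P [p1 [p2 [p1m p2m p12]]] : 1 < #|~: [set pos | ~~ all (misses^~ pos) qs]|.
  by nia.
by exists p1, p2; move: p1m p2m; rewrite !inE !negbK.
Qed.

Hypothesis n_gt2 : 2 < n.

Section Background.
Variables (X : {set 'I_n * 'I_n}) (c : 'I_n).
Hypothesis X_sorted : {in X, forall p : 'I_n * 'I_n, p.1 < p.2}.
Hypothesis X_off_cycle : {in X, forall p : 'I_n * 'I_n, ~~ cycle_adj p}.
Hypothesis X_hub :
  {in X, forall p : 'I_n * 'I_n, exists2 h, h \in X & (h.1 == c) && share_endpoint p h}.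

Definition background : tgraph n :=
  [ffun p => if (p \in X) || ((p.2, p.1) \in X) then Tmax else 0].

Definition secret_graph (pos : 'I_n * 'I_Tmax) : tgraph n :=
  [ffun p => if cycle_edge pos.1 p then pos.2.+1 else background p].

Lemma background_le u v : background (u, v) <= Tmax.
Proof. by rewrite ffunE; case: ifP. Qed.

Lemma background_cases p : background p = 0 \/ background p = Tmax.
Proof. by rewrite ffunE; case: ifP; [right|left]. Qed.

Lemma cycle_edge_notin_X i p :
  cycle_edge i p -> (p \in X = false) /\ ((p.2, p.1) \in X = false).
Proof.
case: p => u v e; have e' : cycle_edge i (v, u) by rewrite -cycle_edge_sym.
by split; apply/negbTE/negP => /X_off_cycle /negP []; apply: cycle_edge_adj; eassumption.
Qed.

Lemma background_cycle_edge i p : cycle_edge i p -> background p = 0.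
Proof. by case/cycle_edge_notin_X => pX qX; rewrite ffunE pX qX. Qed.

Lemma secret_graph_X pos p : p \in X -> secret_graph pos p = Tmax.
Proof.
move=> pX; rewrite !ffunE pX; case: ifP => // e.
by have [] := cycle_edge_notin_X e; rewrite pX.
Qed.

Lemma secret_graph_valid pos : valid_tgraph Tmax (secret_graph pos).
Proof.
split; [|split] => [u v|u|u v]; rewrite !ffunE.
- by rewrite cycle_edge_sym /= orbC.
- have -> : cycle_edge pos.1 (u, u) = false.
    apply/negbTE/negP => /cycle_edge_adj.
    by rewrite /cycle_adj /= eq_sym orbb (negbTE (ordS_neq (ltnW n_gt2) u)).
  by case: ifP => // /orP [] /X_sorted; rewrite ltnn.
- by case: ifP => _; [exact: ltn_ord | case: ifP].
Qed.

Lemma edges_secret_graph pos : edges (secret_graph pos) = cycle_sort pos.1 |: X.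
Proof.
apply/setP => p; rewrite !inE !ffunE.
case: ifP => [e|ne].
  have [-> _] := cycle_edge_notin_X e; rewrite orbF /= andbT.
  by apply/idP/eqP => [|->]; [exact: cycle_edge_sorted | exact: cycle_sort_lt].
have -> : (p == cycle_sort pos.1) = false.
  by apply/negbTE/eqP => pE; rewrite pE cycle_edge_sort in ne.
rewrite orFb; case: (boolP (p \in X)) => [pX|_] /=; first by rewrite X_sorted.
case: ifP => [qX|_]; last by rewrite andbF.
by rewrite ltnNge (ltnW (X_sorted qX)).
Qed.

Lemma card_edges_secret_graph pos : #|edges (secret_graph pos)| = #|X|.+1.
Proof.
rewrite edges_secret_graph cardsU1.
by have [-> _] := cycle_edge_notin_X (cycle_edge_sort pos.1).
Qed.

Lemma ecc_rel_X pos p q : p \in X -> q \in X -> share_endpoint p q ->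
  ecc_rel delta (secret_graph pos) p q.
Proof.
move=> pX qX pq; rewrite /ecc_rel edges_secret_graph !inE pX qX !orbT.
by rewrite -/(share_endpoint p q) pq !secret_graph_X // subnn.
Qed.

Lemma connect_X pos p q : p \in X -> q \in X ->
  connect (ecc_rel delta (secret_graph pos)) p q.
Proof.
move=> pX qX; have [hp hpX /andP [/eqP hpc php]] := X_hub pX.
have [hq hqX /andP [/eqP hqc qhq]] := X_hub qX.
apply: connect_trans (connect1 (ecc_rel_X pos pX hpX php)) _.
apply: connect_trans (connect1 (ecc_rel_X pos hqX qX _)); last by rewrite share_endpoint_sym.
by apply/connect1/ecc_rel_X; rewrite // /share_endpoint hpc hqc eqxx.
Qed.

Lemma num_dECC_secret_graph pos : num_dECC delta (secret_graph pos) <= 2.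
Proof.
rewrite /num_dECC edges_secret_graph imsetU1 cardsU1 -addn1 leq_add ?leq_b1 //.
apply/card_le1_eqP => _ _ /imsetP [p pX ->] /imsetP [q qX ->].
by apply/setP => r; rewrite !inE; apply/idP/idP; apply: connect_trans; apply: connect_X.
Qed.

Lemma secret_graph_adv m : #|X| = m.-1 -> 0 < m ->
  forall pos, adv_graph Tmax m delta (secret_graph pos).
Proof.
move=> cardX m_gt0 pos; split; [exact: secret_graph_valid| |exact: num_dECC_secret_graph].
by rewrite card_edges_secret_graph cardX prednK.
Qed.

Lemma secret_graph_inj : injective secret_graph.
Proof.
move=> [i1 j1] [i2 j2] /(congr1 (fun w : tgraph n => w (i1, succ i1))).
have e1 : cycle_edge i1 (i1, succ i1) by rewrite /cycle_edge eqxx.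
rewrite !ffunE /= e1; case: ifP => [/(cycle_edgeI n_gt2) -> [/val_inj ->] //|_].
by have [/= -> ->] := cycle_edge_notin_X e1.
Qed.

Section Undetected.
Variables (S : seeds n Tmax) (tau : 'I_n -> option nat) (pos : 'I_n * 'I_Tmax).
Hypotheses (tau_bg : infection_times delta S background tau) (Spos : misses S pos).

Lemma secret_ends_not_infectious x :
  (x == pos.1) || (x == succ pos.1) -> ~ infectious delta tau x pos.2.+1.
Proof.
move=> ends [s [xs /andP [spos posd]]].
have [[[i [iS it]]|[v [_ [s_gt0 vx]]]] _] := (tau_bg x s).1 xs.
  by move/forallP: Spos => /(_ (x, i)); rewrite iS /hits /= ends it -ltnS spos posd.
by have := ltn_ord pos.2; case: (background_cases (v, x)) => bg; rewrite bg in vx; lia.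
Qed.

Lemma triggered_secret_graph u t :
  triggered delta S (secret_graph pos) tau u t <-> triggered delta S background tau u t.
Proof.
split=> [][seed|[v [vinf [t_gt0 vu]]]]; try by left.
  right; exists v; split=> //; split=> //; move: vu; rewrite ffunE; case: ifP => // e vu.
  by case: (secret_ends_not_infectious (cycle_edge_ends e)); rewrite vu.
right; exists v; split=> //; split=> //; rewrite ffunE; case: ifP => // e.
by move: vu; rewrite (background_cycle_edge e); lia.
Qed.

Lemma infection_times_secret_graph : infection_times delta S (secret_graph pos) tau.
Proof.
move=> u t; split=> [/(tau_bg u t) [trig early]|[trig early]].
  by split=> [|t' lt /triggered_secret_graph]; [apply/triggered_secret_graph | exact: early].
apply/(tau_bg u t).
by split=> [|t' lt /triggered_secret_graph]; [apply/triggered_secret_graph | exact: early].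
Qed.

End Undetected.

Lemma log_consistent_secret_graph S L pos :
  log_consistent delta S background L -> misses S pos ->
  log_consistent delta S (secret_graph pos) L.
Proof.
move=> [tau [tau_bg [logged [uniq_infector complete]]]] Spos.
exists tau; split; first exact: infection_times_secret_graph.
split=> // u v i uvi; have [vi unseeded uinf uv] := logged u v i uvi.
split=> //; rewrite ffunE; case: ifP => // e.
by move: uv; rewrite (background_cycle_edge e); case: uinf => s [_]; lia.
Qed.

End Background.

End SecretEdge.

Lemma subset_of_card (T : finType) (A : {set T}) k :
  k <= #|A| -> exists2 B : {set T}, B \subset A & #|B| = k.
Proof.
case/card_geqP => s [s_uniq s_size sA]; exists [set x in s].
  by apply/subsetP => x; rewrite inE => /sA.
by rewrite cardsE -s_size; apply/card_uniqP.
Qed.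

Lemma card_sorted_pairs n : 'C(n, 2) <= #|[set p : 'I_n * 'I_n | p.1 < p.2]|.
Proof.
rewrite -card_ltn_sorted_tuples.
have sub : [set t : 2.-tuple 'I_n | sorted ltn (map val t)] \subset
           [set [tuple p.1; p.2] | p in [set p : 'I_n * 'I_n | p.1 < p.2]].
  apply/subsetP => t; rewrite inE.
  case/tupleP: t => a t; case/tupleP: t => b t; rewrite tuple0 /= andbT => ab.
  by apply/imsetP; exists (a, b); [rewrite inE | apply: val_inj].
exact: leq_trans (subset_leq_card sub) (leq_imset_card _ _).
Qed.

Section BackgroundChoice.
Variable n : nat.

(* (1, n - 1) is the only pair off the cycle with no endpoint in {0} or
   [2, n - 2], hence the only one meeting no star edge at node 0. *)
Definition avail := [set p : 'I_n * 'I_n |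
  [&& p.1 < p.2, ~~ cycle_adj p & (p.1 : nat, p.2 : nat) != (1, n.-1)]].

Lemma card_avail : 'C(n, 2) - n - 1 <= #|avail|.
Proof.
pose corner := [set p : 'I_n * 'I_n | (p.1 : nat, p.2 : nat) == (1, n.-1)].
have corner_le1 : #|corner| <= 1.
  apply/card_le1_eqP => -[a b] [a' b']; rewrite !inE !xpair_eqE /=.
  move=> /andP [/eqP a1 /eqP b1] /andP [/eqP a1' /eqP b1'].
  by congr pair; apply: ord_inj; rewrite ?a1 ?a1' ?b1 ?b1'.
have cycle_le : #|[set cycle_sort i | i : 'I_n]| <= n.
  by rewrite (leq_trans (leq_imset_card _ _)) // card_ord.
have sorted_sub : [set p : 'I_n * 'I_n | p.1 < p.2] \subset
    avail :|: ([set cycle_sort i | i : 'I_n] :|: corner).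
  apply/subsetP => p; rewrite !inE => lt; rewrite lt /=.
  case: (boolP (cycle_adj p)) => [adj|_] /=.
    by case: (cycle_adj_sort lt adj) => i ->; rewrite imset_f ?orbT.
  by case: eqP; rewrite ?orbT.
have := leq_trans (card_sorted_pairs n) (subset_leq_card sorted_sub).
have := (leq_card_setU avail ([set cycle_sort i | i : 'I_n] :|: corner)).1.
have := (leq_card_setU [set cycle_sort i | i : 'I_n] corner).1.
lia.
Qed.

Variable c : 'I_n.
Hypothesis c0 : c = 0 :> nat.

Definition star := [set p in avail | p.1 == c].

Lemma star_mem (y : 'I_n) : 2 <= y -> y.+1 < n -> (c, y) \in star.
Proof.
move=> y_ge2 y_lt; rewrite !inE eqxx andbT /cycle_adj -!(inj_eq (@ord_inj n)).
by rewrite !nat_of_ordS c0 y_lt /=; case: (ltnP 1 n); lia.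
Qed.

Lemma avail_hub p : p \in avail -> exists2 h, h \in star & share_endpoint p h.
Proof.
case: p => [[a a_lt] [b b_lt]] pA; case: (eqVneq (Ordinal a_lt) c) => [ac|ac].
  exists (Ordinal a_lt, Ordinal b_lt); first by rewrite in_set pA ac eqxx.
  by rewrite /share_endpoint eqxx.
have y_mid : 2 <= (if 2 <= a then a else b) < n.-1.
  move: pA ac; rewrite inE /cycle_adj -!(inj_eq (@ord_inj n)) !nat_of_ordS c0 /= xpair_eqE.
  by case: (ltnP a.+1 n); case: (ltnP b.+1 n); case: (leqP 2 a); lia.
have y_lt : (if 2 <= a then a else b) < n by case: (leqP 2 a).
exists (c, Ordinal y_lt).
  by apply: star_mem => /=; move: y_mid; case: (leqP 2 a); lia.
by rewrite /share_endpoint -!(inj_eq (@ord_inj n)) /=; case: (leqP 2 a); rewrite eqxx ?orbT.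
Qed.

Lemma background_exists j : j <= #|avail| ->
  exists X : {set 'I_n * 'I_n}, [/\ X \subset avail, #|X| = j &
    {in X, forall p : 'I_n * 'I_n, exists2 h, h \in X & (h.1 == c) && share_endpoint p h}].
Proof.
have starA : star \subset avail by apply/subsetP => p; rewrite inE => /andP [].
case: (leqP j #|star|) => [j_le|j_gt] j_avail.
  have [X XS cardX] := subset_of_card j_le; exists X; split=> //.
    exact: subset_trans XS starA.
  move=> p pX; exists p => //; move/subsetP: XS => /(_ p pX).
  by rewrite inE /share_endpoint !eqxx => /andP [_ ->].
have [Y YD cardY] :
    exists2 Y : {set 'I_n * 'I_n}, Y \subset avail :\: star & #|Y| = j - #|star|.
  by apply: subset_of_card; rewrite cardsDS // leq_sub2r.
have XA : star :|: Y \subset avail by rewrite subUset starA (subset_trans YD) ?subsetDl.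
exists (star :|: Y); split=> //.
  have /eqP -> : #|star :|: Y| == #|star| + #|Y|.
    rewrite (leq_card_setU _ _).2 disjoint_sym disjoint_subset.
    by apply/subsetP => p /(subsetP YD); rewrite in_setD => /andP [].
  by rewrite cardY subnKC // ltnW.
move=> p /(subsetP XA) /avail_hub [h hS ph].
by exists h; [rewrite inE hS | move: hS; rewrite inE => /andP [_ ->]].
Qed.

End BackgroundChoice.

Lemma bin2_subn_gt0 n : 0 < 'C(n, 2) - n -> 3 < n.
Proof. by case: n => [|[|[|[|n]]]]. Qed.

Theorem mainTheorem13 (n Tmax k m delta : nat) :
  0 < n -> 0 < Tmax -> 1 <= k <= n -> 1 <= m <= 'C(n, 2) - n ->
  1 <= delta <= Tmax ->
  exists adv : adversary n Tmax,
    forall qs : seq (seeds n Tmax),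
      all (fun S : seeds n Tmax => #|S| <= k) qs ->
      (exists w, adv_graph Tmax m delta w /\
                 hist_consistent delta (play adv [::] qs) w) /\
      (size qs < (n * Tmax) %/ (2 * delta * k) ->
       exists w1 w2 : tgraph n, w1 <> w2 /\
         adv_graph Tmax m delta w1 /\ adv_graph Tmax m delta w2 /\
         hist_consistent delta (play adv [::] qs) w1 /\
         hist_consistent delta (play adv [::] qs) w2).
Proof.
move=> n_gt0 Tmax_gt0 /andP [k_gt0 _] /andP [m_gt0 m_le] /andP [delta_gt0 _].
have n_gt2 : 2 < n by apply: ltnW; apply: bin2_subn_gt0; lia.
have m_avail : m.-1 <= #|avail n| by have := card_avail n; lia.
have [X [XA cardX X_hub]] := @background_exists n (Ordinal n_gt0) erefl _ m_avail.
have X_sorted : {in X, forall p : 'I_n * 'I_n, p.1 < p.2}.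
  by move=> p /(subsetP XA); rewrite inE => /andP [].
have X_off_cycle : {in X, forall p : 'I_n * 'I_n, ~~ cycle_adj p}.
  by move=> p /(subsetP XA); rewrite inE => /and3P [].
have secret_adv :=
  secret_graph_adv delta Tmax_gt0 n_gt2 X_sorted X_off_cycle X_hub cardX m_gt0.
have [pref prefP] := fin_all_exists (fun S => log_exists delta S (background_le Tmax X)).
have answerable w (S : seeds n Tmax) :
    adv_graph Tmax m delta w -> exists L, log_consistent delta S w L.
  by move=> [[_ [_ w_le]] _ _]; exact: log_exists.
exists (pref_adversary delta (adv_graph Tmax m delta) pref) => qs qsk; split.
  apply: (explainable_play pref answerable).
  by exists (secret_graph X (Ordinal n_gt0, Ordinal Tmax_gt0)); split=> // S L.
move=> few; have [p1 [p2 [p12 qs_p1 qs_p2]]] := two_missed Tmax_gt0 k_gt0 delta_gt0 qsk few.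
have qs_consistent p : all (misses delta ^~ p) qs ->
    {in qs, forall S, log_consistent delta S (secret_graph X p) (pref S)}.
  move=> qs_p S /(allP qs_p) Sp.
  by apply: (log_consistent_secret_graph Tmax_gt0 n_gt2 X_off_cycle _ Sp); apply: prefP.
exists (secret_graph X p1), (secret_graph X p2).
split; first by move/(secret_graph_inj n_gt2 X_off_cycle)/eqP; apply/negP.
do 2 split=> //; split; apply: hist_consistent_play_pref (secret_adv p1) _ _;
  exact: qs_consistent.
Qed.
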